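(* Let $T\in\mathsf{S}^3(V^+)$ be positive (all coordinates strictly positive). Let $u\in V$ with $\|u\|=1$ satisfy $\langle T,u^{\otimes3}\rangle=\rho=\|T\|_\sigma$, and let $$\sigma_2=\min\{|\langle T,u\odot v\odot v\rangle|:\ \langle u,v\rangle=0,\ \|v\|=1\}.$$ If $\sigma_2\ge\rho/2$, then $T$ has a unique best nonnegative symmetric rank-one approximation.
   Context: $V$ is a real vector space of dimension $n$ with a fixed basis, taken orthonormal for the inner product $\langle\cdot,\cdot\rangle$; $V^+$ is the cone of vectors with nonnegative coordinates. $\mathsf{S}^3(V)$ is the space of symmetric 3-tensors and $\mathsf{S}^3(V^+)=\mathsf{S}^3(V)\cap(V^{\otimes3})^+$ the symmetric tensors with nonnegative coordinates. $u\odot v\odot w=\frac16\sum_{\tau}$ (sum of the six tensor products of $u,v,w$ in all orders). The inner product on tensors is the coordinate one and $\|\cdot\|$ the corresponding norm. $\|T\|_\sigma=\max\{|\langle T,u_1\otimes u_2\otimes u_3\rangle|:\|u_i\|=1\}$. A best nonnegative symmetric rank-one approximation of $T$ is a minimizer of $\|T-\lambda x^{\otimes3}\|$ over $\lambda\ge0$, $x\in V^+$ (uniqueness refers to the tensor $\lambda x^{\otimes 3}$). *)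

From HB Require Import structures.
From mathcomp Require Import all_boot all_order all_algebra.
Set Implicit Arguments. Unset Strict Implicit. Unset Printing Implicit Defensive.
Import Order.TTheory GRing.Theory Num.Theory.
Local Open Scope ring_scope.

(* vectors of V (coordinates in the fixed orthonormal basis) *)
Definition vec (R : rcfType) (n : nat) := 'I_n -> R.
Definition tensor3 (R : rcfType) (n : nat) := 'I_n -> 'I_n -> 'I_n -> R.

Definition dotv (R : rcfType) n (u v : vec R n) : R := \sum_(i < n) u i * v i.
Definition normv (R : rcfType) n (u : vec R n) : R := Num.sqrt (dotv u u).

Definition inner3 (R : rcfType) n (T S : tensor3 R n) : R :=
  \sum_(i < n) \sum_(j < n) \sum_(k < n) T i j k * S i j k.
Definition normT (R : rcfType) n (T : tensor3 R n) : R := Num.sqrt (inner3 T T).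

Definition outer3 (R : rcfType) n (u v w : vec R n) : tensor3 R n :=
  fun i j k => u i * v j * w k.
Definition cube3 (R : rcfType) n (x : vec R n) : tensor3 R n := outer3 x x x.
Definition scaleT (R : rcfType) n (l : R) (T : tensor3 R n) : tensor3 R n :=
  fun i j k => l * T i j k.
Definition subT (R : rcfType) n (T S : tensor3 R n) : tensor3 R n :=
  fun i j k => T i j k - S i j k.

Definition sym3 (R : rcfType) n (u v w : vec R n) : tensor3 R n :=
  fun i j k => 6^-1 * (outer3 u v w i j k + outer3 u w v i j k + outer3 v u w i j k
                      + outer3 v w u i j k + outer3 w u v i j k + outer3 w v u i j k).

Definition symmetric3 (R : rcfType) n (T : tensor3 R n) : Prop :=
  forall i j k, T i j k = T j i k /\ T i j k = T i k j.
Definition positive3 (R : rcfType) n (T : tensor3 R n) : Prop :=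
  forall i j k, 0 < T i j k.
Definition nonneg_vec (R : rcfType) n (x : vec R n) : Prop := forall i, 0 <= x i.

Definition is_spectral_norm (R : rcfType) n (T : tensor3 R n) (rho : R) : Prop :=
  (exists u1 u2 u3 : vec R n,
      [/\ normv u1 = 1, normv u2 = 1, normv u3 = 1 &
          `|inner3 T (outer3 u1 u2 u3)| = rho]) /\
  (forall u1 u2 u3 : vec R n, normv u1 = 1 -> normv u2 = 1 -> normv u3 = 1 ->
      `|inner3 T (outer3 u1 u2 u3)| <= rho).

Definition best_nn_rank1 (R : rcfType) n (T : tensor3 R n) (l : R) (x : vec R n) : Prop :=
  [/\ 0 <= l, nonneg_vec x &
      forall (m : R) (y : vec R n), 0 <= m -> nonneg_vec y ->
        normT (subT T (scaleT l (cube3 x))) <= normT (subT T (scaleT m (cube3 y)))].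

Definition unique_best_nn_rank1 (R : rcfType) n (T : tensor3 R n) : Prop :=
  exists (l : R) (x : vec R n), best_nn_rank1 T l x /\
    forall (m : R) (y : vec R n), best_nn_rank1 T m y ->
      forall i j k, scaleT m (cube3 y) i j k = scaleT l (cube3 x) i j k.

From HB Require Import structures.
From mathcomp Require Import all_boot all_order all_algebra ring lra.
Import Order.TTheory GRing.Theory Num.Theory.
Set Implicit Arguments. Unset Strict Implicit. Unset Printing Implicit Defensive.
Local Open Scope ring_scope.

(* Expanding the residual gives
     ||T - m y^3||^2 = (||T||^2 - rho^2) + (m |y|^3 - rho)^2 + 2 m (rho |y|^3 - T(y,y,y)),
   so the best nonnegative rank-one approximations are exactly the tensors
   [rho w^3] with [w] a nonnegative unit maximizer of [T(w,w,w)], and positivity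
   of [T] forces the given maximizer [u] to be nonnegative.  At any unit maximizer [x] one has [T(x,x,.) = rho x].
   Writing another nonnegative maximizer as [w = c u + z] with [z] orthogonal to [u],
   these first-order conditions give [rho c (1 - c) = T(u,z,z) = |z|^2 T(u,v,v)] for
   the unit vector [v] along [z], and [sigma_2 >= rho / 2] then forces [z = 0]. *)

Section Vectors.
Variables (R : rcfType) (n : nat).
Implicit Types (a b c : vec R n) (p q : R).

Definition combv p a q b : vec R n := fun i => p * a i + q * b i.

(* [(normv a)^-1 = 0] when [a = 0], so [unitv a] is then the zero vector. *)
Definition unitv a : vec R n := fun i => (normv a)^-1 * a i.

Lemma dotvC a b : dotv a b = dotv b a.
Proof. by apply: eq_bigr => i _; rewrite mulrC. Qed.

Lemma dotv_combl p a q b c : dotv (combv p a q b) c = p * dotv a c + q * dotv b c.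
Proof.
by rewrite /dotv !mulr_sumr -big_split; apply: eq_bigr => i _; rewrite mulrDl !mulrA.
Qed.

Lemma dotv_combr p a q b c : dotv c (combv p a q b) = p * dotv c a + q * dotv c b.
Proof. by rewrite dotvC dotv_combl !(dotvC c). Qed.

Lemma dotvZl p a b : dotv (fun i => p * a i) b = p * dotv a b.
Proof. by rewrite /dotv mulr_sumr; apply: eq_bigr => i _; rewrite mulrA. Qed.

Lemma dotvv_ge0 a : 0 <= dotv a a.
Proof. by apply: sumr_ge0 => i _; rewrite -expr2 sqr_ge0. Qed.

Lemma dotvv_eq0 a : dotv a a = 0 -> forall i, a i = 0.
Proof.
move=> a0 i; apply/eqP; rewrite -sqrf_eq0 expr2; apply/eqP.
by apply: (psumr_eq0P _ a0) => // j _; rewrite -expr2 sqr_ge0.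
Qed.

Lemma normv_ge0 a : 0 <= normv a.
Proof. exact: sqrtr_ge0. Qed.

Lemma normv_sqr a : normv a ^+ 2 = dotv a a.
Proof. by rewrite sqr_sqrtr ?dotvv_ge0. Qed.

Lemma normv_eq1 a : (normv a = 1) <-> (dotv a a = 1).
Proof.
split=> [a1|a1]; first by rewrite -normv_sqr a1 expr1n.
by rewrite /normv a1 sqrtr1.
Qed.

Lemma unitvK a i : a i = normv a * unitv a i.
Proof.
have [a0|a0] := eqVneq (normv a) 0.
  by rewrite a0 mul0r; apply: dotvv_eq0; rewrite -normv_sqr a0 expr0n.
by rewrite mulrA mulfV // mul1r.
Qed.

Lemma normv_unitv a : normv a != 0 -> normv (unitv a) = 1.
Proof.
move=> a0; apply/normv_eq1; rewrite dotvZl dotvC dotvZl -normv_sqr.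
by rewrite mulrA -expr2 -exprMn mulVf // expr1n.
Qed.

Lemma exists_coord_neq0 a : dotv a a = 1 -> exists i, a i != 0.
Proof.
move=> a1; have [/existsP //|/existsPn a0] := boolP [exists i, a i != 0].
suff : dotv a a = 0 by rewrite a1 => /eqP; rewrite oner_eq0.
by apply: big1 => i _; move/negPn/eqP: (a0 i) ->; rewrite mul0r.
Qed.

End Vectors.

Lemma psum3_eq0 (R : numDomainType) n (F : 'I_n -> 'I_n -> 'I_n -> R) :
  (forall i j k, 0 <= F i j k) ->
  \sum_(i < n) \sum_(j < n) \sum_(k < n) F i j k = 0 -> forall i j k, F i j k = 0.
Proof.
move=> F0 S0 i j k.
have F1_ge0 i' j' : 0 <= \sum_(k < n) F i' j' k by apply: sumr_ge0.
have F2_ge0 i' : 0 <= \sum_(j < n) \sum_(k < n) F i' j k by apply: sumr_ge0.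
have S1 := psumr_eq0P (fun i' _ => F2_ge0 i') S0 (isT : true).
have S2 := psumr_eq0P (fun j' _ => F1_ge0 i j') (S1 i) (isT : true).
exact: (psumr_eq0P (fun k' _ => F0 i j k') (S2 j)).
Qed.

Section Trilinear.
Variables (R : rcfType) (n : nat) (T : tensor3 R n).
Implicit Types (a b c : vec R n) (p q r : R).

Definition trilin a b c : R := inner3 T (outer3 a b c).

Definition contract a b : vec R n :=
  fun k => \sum_(i < n) \sum_(j < n) T i j k * (a i * b j).

Lemma trilinE a b c :
  trilin a b c = \sum_(i < n) \sum_(j < n) \sum_(k < n) T i j k * (a i * b j * c k).
Proof. by []. Qed.

Lemma eq_trilin a a' b b' c c' : a =1 a' -> b =1 b' -> c =1 c' ->
  trilin a b c = trilin a' b' c'.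
Proof.
move=> ea eb ec; apply: eq_bigr => i _; apply: eq_bigr => j _.
by apply: eq_bigr => k _; rewrite /outer3 ea eb ec.
Qed.

Lemma trilinZ p q r a b c :
  trilin (fun i => p * a i) (fun j => q * b j) (fun k => r * c k) =
  p * q * r * trilin a b c.
Proof.
rewrite !trilinE !mulr_sumr; apply: eq_bigr => i _; rewrite mulr_sumr.
apply: eq_bigr => j _; rewrite mulr_sumr; apply: eq_bigr => k _; ring.
Qed.

Lemma trilin_combl p a q a' b c :
  trilin (combv p a q a') b c = p * trilin a b c + q * trilin a' b c.
Proof.
rewrite !trilinE !mulr_sumr -big_split; apply: eq_bigr => i _.
rewrite !mulr_sumr -big_split; apply: eq_bigr => j _.
rewrite !mulr_sumr -big_split; apply: eq_bigr => k _ /=; rewrite /combv; ring.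
Qed.

Lemma trilin_contract a b c : trilin a b c = dotv (contract a b) c.
Proof.
rewrite trilinE /dotv /contract.
under eq_bigr => i _ do rewrite exchange_big.
rewrite exchange_big; apply: eq_bigr => k _; rewrite big_distrl.
apply: eq_bigr => i _; rewrite big_distrl; apply: eq_bigr => j _ /=; ring.
Qed.

Hypothesis T_sym : symmetric3 T.

Lemma trilinC12 a b c : trilin a b c = trilin b a c.
Proof.
rewrite !trilinE exchange_big; apply: eq_bigr => i _; apply: eq_bigr => j _.
by apply: eq_bigr => k _; rewrite (proj1 (T_sym j i k)); ring.
Qed.

Lemma trilinC23 a b c : trilin a b c = trilin a c b.
Proof.
rewrite !trilinE; apply: eq_bigr => i _; rewrite exchange_big.
apply: eq_bigr => j _; apply: eq_bigr => k _.
by rewrite (proj2 (T_sym i k j)); ring.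
Qed.

Lemma trilin_combm p b q b' a c :
  trilin a (combv p b q b') c = p * trilin a b c + q * trilin a b' c.
Proof. by rewrite trilinC12 trilin_combl !(trilinC12 a). Qed.

Lemma trilin_combr p c q c' a b :
  trilin a b (combv p c q c') = p * trilin a b c + q * trilin a b c'.
Proof. by rewrite trilinC23 trilin_combm !(trilinC23 a b). Qed.

Lemma inner3_sym3 a b : inner3 T (sym3 a b b) = trilin a b b.
Proof.
have -> : inner3 T (sym3 a b b) = 6^-1 * (trilin a b b + trilin a b b +
    trilin b a b + trilin b b a + trilin b a b + trilin b b a).
  rewrite /trilin /inner3 -!big_split mulr_sumr; apply: eq_bigr => i _.
  rewrite -!big_split mulr_sumr; apply: eq_bigr => j _.
  rewrite -!big_split mulr_sumr; apply: eq_bigr => k _.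
  by rewrite /sym3 /outer3 /=; ring.
rewrite -(trilinC12 a b b) -(trilinC23 b a b) -(trilinC12 a b b).
by field.
Qed.

End Trilinear.

Section SpectralNorm.
Variables (R : rcfType) (n : nat) (T : tensor3 R n) (rho : R).
Hypothesis T_rho : is_spectral_norm T rho.

Lemma spectral_norm_ge0 : 0 <= rho.
Proof. by case: T_rho => [[u1 [u2 [u3 [_ _ _ <-]]]] _]. Qed.

Lemma spectral_norm_bound a b c :
  `|trilin T a b c| <= rho * normv a * normv b * normv c.
Proof.
rewrite (eq_trilin T (unitvK a) (unitvK b) (unitvK c)) trilinZ normrM.
rewrite ger0_norm ?mulr_ge0 ?normv_ge0 //.
rewrite [X in _ <= X](_ : _ = normv a * normv b * normv c * rho); last by ring.
have [abc0|abc0] := eqVneq (normv a * normv b * normv c) 0.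
  by rewrite abc0 !mul0r.
rewrite ler_wpM2l ?mulr_ge0 ?normv_ge0 //.
move: abc0; rewrite !mulf_eq0 !negb_or => /andP[/andP[a0 b0] c0].
by apply: T_rho.2; apply: normv_unitv.
Qed.

Lemma trilin_diag_le y : trilin T y y y <= rho * normv y ^+ 3.
Proof.
apply: le_trans (ler_norm _) _.
by rewrite (exprSr _ 2) expr2 !mulrA; apply: spectral_norm_bound.
Qed.

(* First-order optimality at a maximizer: the contraction [T(x, x, .)] is
   [rho x], since its norm is at most [rho] and its component along [x] is [rho]. *)
Lemma spectral_maximizer_contract x : dotv x x = 1 -> trilin T x x x = rho ->
  forall z, trilin T x x z = rho * dotv x z.
Proof.
move=> x1 xrho z; set g := contract T x x.
have rho0 := spectral_norm_ge0.
have gx : dotv g x = rho by rewrite -trilin_contract.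
have gg : dotv g g <= rho ^+ 2.
  have : normv g ^+ 2 <= rho * normv g.
    rewrite normv_sqr -trilin_contract; apply: le_trans (ler_norm _) _.
    by have := spectral_norm_bound x x g; rewrite (normv_eq1 x).2 // !mulr1.
  by rewrite -normv_sqr; have := normv_ge0 g; nra.
have dev0 : dotv (combv 1 g (- rho) x) (combv 1 g (- rho) x) = 0.
  apply/eqP; rewrite eq_le dotvv_ge0 andbT dotv_combl !dotv_combr.
  by rewrite (dotvC x g) gx x1; lra.
have g_eq k : g k = rho * x k.
  by have /eqP := dotvv_eq0 dev0 k; rewrite /combv mul1r mulNr subr_eq0 => /eqP.
rewrite trilin_contract -/g /dotv mulr_sumr; apply: eq_bigr => k _.
by rewrite g_eq mulrA.
Qed.

Hypothesis T_pos : positive3 T.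

(* [|u|] is a unit vector with [T(|u|,|u|,|u|) >= T(u,u,u) = rho]; equality forces
   [|u_i u_i u_k| = u_i u_i u_k] for all [k], where [u_i <> 0]. *)
Lemma spectral_maximizer_nonneg u : dotv u u = 1 -> trilin T u u u = rho ->
  nonneg_vec u.
Proof.
move=> u1 urho; set a := fun i => `|u i|.
have a1 : dotv a a = 1.
  rewrite -u1; apply: eq_bigr => i _.
  by rewrite /a -normrM ger0_norm // -expr2 sqr_ge0.
have auE : trilin T a a a - trilin T u u u =
    \sum_(i < n) \sum_(j < n) \sum_(k < n) T i j k * (a i * a j * a k - u i * u j * u k).
  rewrite !trilinE -sumrB; apply: eq_bigr => i _; rewrite -sumrB.
  by apply: eq_bigr => j _; rewrite -sumrB; apply: eq_bigr => k _; rewrite mulrBr.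
have term_ge0 i j k : 0 <= T i j k * (a i * a j * a k - u i * u j * u k).
  by rewrite mulr_ge0 ?(ltW (T_pos i j k)) // subr_ge0 /a -!normrM ler_norm.
have au0 : trilin T a a a - trilin T u u u = 0.
  apply/eqP; rewrite eq_le {2}auE sumr_ge0 => [|i _]; last first.
    by apply: sumr_ge0 => j _; apply: sumr_ge0 => k _.
  rewrite andbT urho subr_le0; apply: le_trans (ler_norm _) _.
  by apply: T_rho.2; apply/normv_eq1.
have [i ui0] := exists_coord_neq0 u1.
have uii0 : 0 < u i * u i by rewrite -expr2 exprn_even_gt0.
move=> k; have /eqP := psum3_eq0 term_ge0 (etrans (esym auE) au0) i i k.
rewrite mulf_eq0 gt_eqF //= subr_eq0 /a -normrM (ger0_norm (ltW uii0)).
by move=> /eqP /(mulfI (lt0r_neq0 uii0)) <-.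
Qed.

Lemma spectral_norm_gt0 u : dotv u u = 1 -> trilin T u u u = rho -> 0 < rho.
Proof.
move=> u1 urho; have u0 := spectral_maximizer_nonneg u1 urho.
have term_ge0 i j k : 0 <= T i j k * (u i * u j * u k).
  by rewrite !mulr_ge0 ?(ltW (T_pos i j k)).
rewrite lt_def spectral_norm_ge0 andbT; apply/eqP => rho0.
have [i ui0] := exists_coord_neq0 u1.
have sum0 : \sum_(i < n) \sum_(j < n) \sum_(k < n) T i j k * (u i * u j * u k) = 0.
  by rewrite -trilinE urho rho0.
have /eqP := psum3_eq0 term_ge0 sum0 i i i.
by rewrite !mulf_eq0 gt_eqF //= (negbTE ui0).
Qed.

End SpectralNorm.

Lemma gap_absurd (R : realFieldType) (rho c s t : R) :
  0 < rho -> 0 <= c -> 0 < s -> s = 1 - c ^+ 2 ->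
  rho * c = c ^+ 2 * rho + s * t -> rho / 2 <= `|t| -> False.
Proof.
move=> rho0 c0 s0 sE eq t_ge.
have c1 : c < 1.
  by rewrite ltNge; apply/negP => c1; move: sE; rewrite expr2; nra.
have t0 : 0 <= t.
  rewrite leNgt; apply/negP => t0.
  have : s * t < 0 by rewrite pmulr_rlt0.
  have : 0 <= rho * c * (1 - c) by rewrite !mulr_ge0 ?subr_ge0 // ltW.
  move: eq; rewrite expr2; nra.
move: t_ge; rewrite ger0_norm // => t_ge.
have : s * (rho / 2) <= s * t by rewrite ler_pM2l.
have : 0 < rho * (1 - c) ^+ 2 by rewrite mulr_gt0 // exprn_gt0 // subr_gt0.
move: eq sE; rewrite !expr2; nra.
Qed.

Section GapUniqueness.
Variables (R : rcfType) (n : nat) (T : tensor3 R n) (rho : R) (u : vec R n).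
Hypotheses (T_sym : symmetric3 T) (T_rho : is_spectral_norm T rho).
Hypotheses (rho_gt0 : 0 < rho) (u1 : dotv u u = 1) (u_rho : trilin T u u u = rho).
Hypothesis u_ge0 : nonneg_vec u.
Hypothesis gap :
  forall v, dotv u v = 0 -> normv v = 1 -> rho / 2 <= `|trilin T u v v|.

Lemma nonneg_maximizer_unique w : nonneg_vec w -> dotv w w = 1 ->
  trilin T w w w = rho -> w =1 u.
Proof.
move=> w_ge0 w1 w_rho; set c := dotv u w; set z := combv 1 w (- c) u.
have c0 : 0 <= c by apply: sumr_ge0 => i _; apply: mulr_ge0.
have uz : dotv u z = 0 by rewrite dotv_combr u1 -/c; ring.
have zz : dotv z z = 1 - c ^+ 2.
  by rewrite dotv_combl !dotv_combr w1 u1 (dotvC w u) -/c; ring.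
have wE : w =1 combv c u 1 z by move=> i; rewrite /z /combv; ring.
clearbody z.
have uuz : trilin T u u z = 0.
  by rewrite (spectral_maximizer_contract T_rho u1 u_rho) uz mulr0.
have wwu : trilin T w w u = rho * c.
  by rewrite (spectral_maximizer_contract T_rho w1 w_rho) dotvC.
have expand : rho * c = c ^+ 2 * rho + trilin T u z z.
  rewrite -wwu trilinC23 // trilinC12 // (eq_trilin T (fun=> erefl) wE wE).
  rewrite trilin_combm // !trilin_combr // u_rho uuz (trilinC23 _ u z u) // uuz.
  ring.
have [z0|z0] := eqVneq (dotv z z) 0.
  have c1 : c = 1 by move: zz; rewrite z0 expr2; nra.
  by move=> i; rewrite wE /combv (dotvv_eq0 z0) c1 mulr0 addr0 mul1r.
exfalso.
have nz : normv z != 0.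
  by apply: contra z0 => /eqP nz0; rewrite -normv_sqr nz0 expr0n.
have uzzE : trilin T u z z = dotv z z * trilin T u (unitv z) (unitv z).
  have u1E : u =1 (fun i => 1 * u i) by move=> i; rewrite mul1r.
  rewrite (eq_trilin T u1E (unitvK z) (unitvK z)) trilinZ.
  by rewrite mul1r -expr2 normv_sqr.
have uv : dotv u (unitv z) = 0 by rewrite dotvC dotvZl dotvC uz mulr0.
have zz_gt0 : 0 < dotv z z by rewrite lt_def z0 dotvv_ge0.
apply: (gap_absurd rho_gt0 c0 zz_gt0 zz _ (gap uv (normv_unitv nz))).
by rewrite -uzzE.
Qed.

End GapUniqueness.

Section BestApproximation.
Variables (R : rcfType) (n : nat) (T : tensor3 R n) (rho : R).

Let residual m y := subT T (scaleT m (cube3 y)).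

Lemma inner3_ge0 (S : tensor3 R n) : 0 <= inner3 S S.
Proof.
apply: sumr_ge0 => i _; apply: sumr_ge0 => j _; apply: sumr_ge0 => k _.
by rewrite -expr2 sqr_ge0.
Qed.

Lemma inner3_residual m y : inner3 (residual m y) (residual m y) =
  inner3 T T - 2 * m * trilin T y y y + m ^+ 2 * dotv y y ^+ 3.
Proof.
have cubeE : dotv y y ^+ 3 = \sum_(i < n) \sum_(j < n) \sum_(k < n)
    (y i * y i) * (y j * y j) * (y k * y k).
  rewrite exprS expr2 /dotv big_distrl; apply: eq_bigr => i _ /=.
  rewrite big_distrl mulr_sumr; apply: eq_bigr => j _ /=.
  by rewrite !mulr_sumr; apply: eq_bigr => k _; ring.
rewrite cubeE trilinE /inner3 !mulr_sumr -sumrB -big_split.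
apply: eq_bigr => i _ /=.
rewrite !mulr_sumr -sumrB -big_split; apply: eq_bigr => j _ /=.
rewrite !mulr_sumr -sumrB -big_split; apply: eq_bigr => k _ /=.
by rewrite /residual /subT /scaleT /cube3 /outer3; ring.
Qed.

Lemma inner3_residual_excess m y :
  inner3 (residual m y) (residual m y) - (inner3 T T - rho ^+ 2) =
  (m * normv y ^+ 3 - rho) ^+ 2 + 2 * (m * (rho * normv y ^+ 3 - trilin T y y y)).
Proof. by rewrite inner3_residual -normv_sqr; ring. Qed.

Hypothesis T_rho : is_spectral_norm T rho.

Lemma inner3_residual_ge m y : 0 <= m ->
  inner3 T T - rho ^+ 2 <= inner3 (residual m y) (residual m y).
Proof.
move=> m0; rewrite -subr_ge0 inner3_residual_excess addr_ge0 ?sqr_ge0 //.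
by rewrite !mulr_ge0 // subr_ge0 trilin_diag_le.
Qed.

Variable u : vec R n.
Hypotheses (u_ge0 : nonneg_vec u) (u1 : dotv u u = 1) (u_rho : trilin T u u u = rho).

Lemma inner3_residual_maximizer :
  inner3 (residual rho u) (residual rho u) = inner3 T T - rho ^+ 2.
Proof.
apply/eqP; rewrite -subr_eq0 inner3_residual_excess (normv_eq1 u).2 // u_rho.
by rewrite expr1n mulr1 subrr expr0n add0r mulr0 mulr0.
Qed.

Lemma best_nn_rank1_maximizer : best_nn_rank1 T rho u.
Proof.
split=> // [|m y m0 _]; first exact: spectral_norm_ge0 T_rho.
rewrite /normT ler_sqrt ?inner3_ge0 //.
by rewrite inner3_residual_maximizer inner3_residual_ge.
Qed.

Hypothesis rho_gt0 : 0 < rho.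

Lemma best_nn_rank1_scale m y : best_nn_rank1 T m y ->
  m * normv y ^+ 3 = rho /\ trilin T y y y = rho * normv y ^+ 3.
Proof.
case=> m0 _ /(_ rho u (ltW rho_gt0) u_ge0).
rewrite /normT ler_sqrt ?inner3_ge0 // inner3_residual_maximizer.
rewrite -subr_le0 inner3_residual_excess => excess_le0.
have dev_ge0 : 0 <= m * (rho * normv y ^+ 3 - trilin T y y y).
  by rewrite mulr_ge0 // subr_ge0 trilin_diag_le.
have /eqP : (m * normv y ^+ 3 - rho) ^+ 2 = 0.
  by apply/eqP; rewrite eq_le sqr_ge0 andbT; lra.
rewrite sqrf_eq0 subr_eq0 => /eqP my_rho; split=> //.
have /eqP : m * (rho * normv y ^+ 3 - trilin T y y y) = 0.
  apply/eqP; rewrite eq_le dev_ge0 andbT.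
  by have := sqr_ge0 (m * normv y ^+ 3 - rho); lra.
rewrite mulf_eq0 subr_eq0 => /orP[/eqP m_eq0|/eqP //].
by move: my_rho rho_gt0; rewrite m_eq0 mul0r => <-; rewrite ltxx.
Qed.

Lemma best_nn_rank1_unitv m y : best_nn_rank1 T m y ->
  [/\ nonneg_vec (unitv y), dotv (unitv y) (unitv y) = 1,
      trilin T (unitv y) (unitv y) (unitv y) = rho &
      forall i j k, scaleT m (cube3 y) i j k = scaleT rho (cube3 (unitv y)) i j k].
Proof.
move=> best; have [my_rho y_rho] := best_nn_rank1_scale best.
have y0 : normv y != 0.
  by apply: contraTneq rho_gt0 => y0; rewrite -my_rho y0 expr0n mulr0 ltxx.
split.
- by case: best => _ y_ge0 _ i; rewrite mulr_ge0 ?invr_ge0 ?normv_ge0.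
- exact/normv_eq1/normv_unitv.
- by rewrite /unitv trilinZ y_rho; field.
- by move=> i j k; rewrite /scaleT /cube3 /outer3 -my_rho !(unitvK y); ring.
Qed.

End BestApproximation.

Theorem mainTheorem11 (R : rcfType) (n : nat) (T : tensor3 R n) (u : vec R n) (rho : R) :
  symmetric3 T -> positive3 T ->
  normv u = 1 ->
  inner3 T (cube3 u) = rho ->
  is_spectral_norm T rho ->
  (forall v : vec R n, dotv u v = 0 -> normv v = 1 ->
      rho / 2 <= `|inner3 T (sym3 u v v)|) ->
  unique_best_nn_rank1 T.
Proof.
move=> T_sym T_pos /normv_eq1 u1 u_rho T_rho gap.
have u_ge0 := spectral_maximizer_nonneg T_rho T_pos u1 u_rho.
have rho_gt0 := spectral_norm_gt0 T_rho T_pos u1 u_rho.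
exists rho, u; split; first exact: best_nn_rank1_maximizer.
move=> m y /(best_nn_rank1_unitv T_rho u_ge0 u1 u_rho rho_gt0).
case=> w_ge0 w1 w_rho my_w.
have gap_trilin v : dotv u v = 0 -> normv v = 1 -> rho / 2 <= `|trilin T u v v|.
  by rewrite -inner3_sym3 //; apply: gap.
have wu := nonneg_maximizer_unique T_sym T_rho rho_gt0 u1 u_rho u_ge0 gap_trilin
  w_ge0 w1 w_rho.
by move=> i j k; rewrite my_w /scaleT /cube3 /outer3 !wu.
Qed.
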